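(* Let $\mathcal{A}$ and $\mathcal{B}$ be Boolean algebras. Then the Fremlin (Archimedean Riesz space) tensor product $\mathcal{C}(\mathcal{A})\bar{\otimes}\mathcal{C}(\mathcal{B})$ is Riesz isomorphic to $\mathcal{C}(\mathcal{A}\otimes\mathcal{B})$, where $\mathcal{A}\otimes\mathcal{B}$ denotes the free product of $\mathcal{A}$ and $\mathcal{B}$.
   Context: Place functions: for a Riesz space $E$ and $e\in E^+$, $x\in E^+$ is a component of $e$ if $x\wedge(e-x)=0$; the set $\mathcal{C}(e)$ of components is a Boolean algebra. For a Boolean algebra $\mathcal{A}$ there is an Archimedean Riesz space $E$ with strong unit $e$ and a Boolean isomorphism $\chi\colon\mathcal{A}\to\mathcal{C}(e)$ such that $E$ is the linear span of $\mathcal{C}(e)$; this is unique up to isomorphism and $E$ is denoted $\mathcal{C}(\mathcal{A})$ (Carathéodory space of place functions). Free product: if $Z_1,Z_2$ are the Stone spaces of $\mathcal{A},\mathcal{B}$ (nonzero ring homomorphisms to $\mathbb{Z}_2$, with $a\mapsto\hat a=\{z: z(a)=1\}$ the Stone representation), then $\mathcal{A}\otimes\mathcal{B}$ is the Boolean algebra of clopen subsets of $Z_1\times Z_2$ (product topology), with canonical Boolean homomorphisms $\epsilon_A(a)=\hat a\times Z_2$, $\epsilon_B(b)=Z_1\times\hat b$. Fremlin tensor product: for Archimedean Riesz spaces $E,F$, $E\bar{\otimes}F$ is the Archimedean Riesz space $G$ together with a Riesz bimorphism $\otimes\colon E\times F\to G$ such that for every Archimedean Riesz space $H$ and Riesz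 bimorphism $\psi\colon E\times F\to H$ there is a unique Riesz homomorphism $T\colon G\to H$ with $T\circ\otimes=\psi$. *)

From HB Require Import structures.
From mathcomp Require Import all_boot all_order all_algebra.
From mathcomp Require Import reals.
Set Implicit Arguments. Unset Strict Implicit. Unset Printing Implicit Defensive.
Import Order.TTheory GRing.Theory Num.Theory.
Local Open Scope ring_scope.

Record RieszSpace (R : realType) := {
  rcar :> lmodType R;
  rle : rcar -> rcar -> Prop;
  rjoin : rcar -> rcar -> rcar;
  rmeet : rcar -> rcar -> rcar;
  rle_refl : forall x, rle x x;
  rle_trans : forall x y z, rle x y -> rle y z -> rle x z;
  rle_anti : forall x y, rle x y -> rle y x -> x = y;
  rle_add : forall x y z, rle x y -> rle (x + z) (y + z);
  rle_scale : forall (a : R) x y, 0 <= a -> rle x y -> rle (a *: x) (a *: y);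
  rjoin_ub1 : forall x y, rle x (rjoin x y);
  rjoin_ub2 : forall x y, rle y (rjoin x y);
  rjoin_least : forall x y z, rle x z -> rle y z -> rle (rjoin x y) z;
  rmeet_lb1 : forall x y, rle (rmeet x y) x;
  rmeet_lb2 : forall x y, rle (rmeet x y) y;
  rmeet_greatest : forall x y z, rle z x -> rle z y -> rle z (rmeet x y)
}.
Arguments rle {R E} : rename.
Arguments rjoin {R E} : rename.
Arguments rmeet {R E} : rename.

Section Riesz.
Variable R : realType.

Definition rabs (E : RieszSpace R) (x : E) : E := rjoin x (- x).

Definition archimedean (E : RieszSpace R) : Prop :=
  forall x y : E, rle 0 x -> (forall n : nat, rle (x *+ n) y) -> x = 0.

Definition linear_map (E F : RieszSpace R) (T : E -> F) : Prop :=
  forall (a : R) (x y : E), T (a *: x + y) = a *: T x + T y.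

Definition riesz_hom (E F : RieszSpace R) (T : E -> F) : Prop :=
  linear_map T /\ forall x y : E, T (rjoin x y) = rjoin (T x) (T y).

Definition riesz_iso (E F : RieszSpace R) (T : E -> F) : Prop :=
  riesz_hom T /\ bijective T.

Definition riesz_bimorphism (E F G : RieszSpace R) (psi : E -> F -> G) : Prop :=
  [/\ forall x : E, linear_map (psi x),
      forall y : F, linear_map (fun x => psi x y),
      forall x : E, rle 0 x -> riesz_hom (psi x)
    & forall y : F, rle 0 y -> riesz_hom (fun x => psi x y)].

Definition fremlin_tensor_product (E F G : RieszSpace R) (tp : E -> F -> G) : Prop :=
  [/\ archimedean G, riesz_bimorphism tp &
      forall (H : RieszSpace R) (psi : E -> F -> H),
        archimedean H -> riesz_bimorphism psi ->
        exists! T : G -> H, riesz_hom T /\ forall x y, T (tp x y) = psi x y].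

Definition component (E : RieszSpace R) (e x : E) : Prop :=
  rle 0 x /\ rmeet x (e - x) = 0.

Definition strong_unit (E : RieszSpace R) (e : E) : Prop :=
  rle 0 e /\ forall x : E, exists n : nat, rle (rabs x) (e *+ n).

Definition spanned_by_components (E : RieszSpace R) (e : E) : Prop :=
  forall x : E, exists s : seq (R * E),
    (forall i, (i < size s)%N -> component e (nth (0, 0) s i).2) /\
    x = \sum_(p <- s) p.1 *: p.2.

(* Generic Boolean algebra given by its carrier predicate [dom] in a type T
   and its operations.  [chi] is a Boolean isomorphism from it onto the
   Boolean algebra C(e) (operations: meet, join, e - x, 0, e). *)
Definition boolean_iso_onto_components (T : Type) (dom : T -> Prop)
    (meetT joinT : T -> T -> T) (complT : T -> T) (botT topT : T)
    (E : RieszSpace R) (e : E) (chi : T -> E) : Prop :=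
  [/\ forall a, dom a -> component e (chi a),
      forall x, component e x -> exists2 a, dom a & chi a = x &
      forall a b, dom a -> dom b -> chi a = chi b -> a = b] /\
  [/\ forall a b, dom a -> dom b -> chi (meetT a b) = rmeet (chi a) (chi b),
      forall a b, dom a -> dom b -> chi (joinT a b) = rjoin (chi a) (chi b),
      forall a, dom a -> chi (complT a) = e - chi a &
      chi botT = 0 /\ chi topT = e].

(* (E, e, chi) is a realization of the Caratheodory space C(A) of place
   functions for the Boolean algebra given by (dom, operations). *)
Definition caratheodory_space_gen (T : Type) (dom : T -> Prop)
    (meetT joinT : T -> T -> T) (complT : T -> T) (botT topT : T)
    (E : RieszSpace R) (e : E) (chi : T -> E) : Prop :=
  [/\ archimedean E, strong_unit e,
      boolean_iso_onto_components dom meetT joinT complT botT topT e chi &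
      spanned_by_components e].

Definition caratheodory_space (d : Order.disp_t) (A : ctbDistrLatticeType d)
    (E : RieszSpace R) (e : E) (chi : A -> E) : Prop :=
  caratheodory_space_gen (fun _ : A => True) Order.meet Order.join Order.compl
    Order.bottom Order.top e chi.

End Riesz.

Section Stone.
Variables (d : Order.disp_t) (A : ctbDistrLatticeType d).

(* symmetric difference = Boolean-ring addition *)
Definition symdiff (a b : A) : A := Order.join (Order.diff a b) (Order.diff b a).

(* nonzero ring homomorphisms from the Boolean ring A to Z_2 *)
Definition stone_point (z : A -> bool) : Prop :=
  [/\ forall a b, z (symdiff a b) = xorb (z a) (z b),
      forall a b, z (Order.meet a b) = z a && z b &
      exists a, z a].

Definition stone_space := {z : A -> bool | stone_point z}.

Definition stone_hat (a : A) : stone_space -> Prop := fun z => proj1_sig z a.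
End Stone.

Section FreeProduct.
Variables (dA dB : Order.disp_t) (A : ctbDistrLatticeType dA)
          (B : ctbDistrLatticeType dB).

Definition Z12 := (stone_space A * stone_space B)%type.

Definition prod_open (U : Z12 -> Prop) : Prop :=
  forall p, U p -> exists (a : A) (b : B),
    [/\ stone_hat a p.1, stone_hat b p.2 &
        forall q, stone_hat a q.1 -> stone_hat b q.2 -> U q].

Definition prod_clopen (U : Z12 -> Prop) : Prop :=
  prod_open U /\ prod_open (fun p => ~ U p).

(* The free product A (x) B: Boolean algebra of clopen subsets of Z1 x Z2 *)
Definition caratheodory_space_free_product (R : realType)
    (E : RieszSpace R) (e : E) (chi : (Z12 -> Prop) -> E) : Prop :=
  caratheodory_space_gen prod_clopen
    (fun U V p => U p /\ V p) (fun U V p => U p \/ V p)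
    (fun U p => ~ U p) (fun _ => False) (fun _ => True) e chi.
End FreeProduct.

(** Every element of C(A) is a combination of the pairwise disjoint components χ(t), t an
    atom of a finite subalgebra of A, and joins of such combinations are computed
    coefficientwise.  Hence the bilinear extension ψ of (χ_A a, χ_B b) ↦ χ(â × b̂) maps
    finite grids of atoms to disjoint families and is a Riesz bimorphism, and the universal
    property gives a Riesz homomorphism T with T (x ⊗ y) = ψ x y.  Conversely, by
    compactness of the Stone spaces every clopen subset of Z₁ × Z₂ is a union of cells of a
    finite grid of rectangles, so the rectangle components span C(A ⊗ B) and form disjoint
    families on grids; therefore χ(â × b̂) ↦ χ_A a ⊗ χ_B b extends to a Riesz homomorphism
    M.  Uniqueness in the universal property gives M ∘ T = id, and T ∘ M = id holds on
    rectangles. *)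

From HB Require Import structures.
From mathcomp Require Import all_boot all_order all_algebra.
From mathcomp Require Import reals boolp classical_sets.
Set Implicit Arguments. Unset Strict Implicit. Unset Printing Implicit Defensive.
Import Order.Theory GRing.Theory Num.Theory.
Local Open Scope ring_scope.

(** * Linear maps and Riesz spaces *)

Section LinearMap.
Variables (R : pzRingType) (U V : lmodType R) (f : U -> V).
Hypothesis f_lin : linear f.

Lemma linear_mapB : {morph f : x y / x - y}.
Proof. exact: zmod_morphism_linear f_lin. Qed.

Lemma linear_map0 : f 0 = 0.
Proof. by rewrite -(subrr 0) linear_mapB subrr. Qed.

Lemma linear_mapD : {morph f : x y / x + y}.
Proof. exact: (GRing.semilinear_linear f_lin).2. Qed.

Lemma linear_mapZ a x : f (a *: x) = a *: f x.
Proof. exact: (GRing.semilinear_linear f_lin).1. Qed.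

Lemma linear_map_sum (I : Type) (s : seq I) (P : pred I) (F : I -> U) :
  f (\sum_(i <- s | P i) F i) = \sum_(i <- s | P i) f (F i).
Proof. exact: (big_morph f linear_mapD linear_map0). Qed.

End LinearMap.

Section RieszLattice.
Variables (R : realType) (E : RieszSpace R).
Implicit Types x y z : E.

Lemma rle_addl x y z : rle x y -> rle (z + x) (z + y).
Proof. by move=> h; rewrite ![z + _]addrC; apply: rle_add. Qed.

Lemma rle_opp x y : rle x y -> rle (- y) (- x).
Proof.
move=> h; have := rle_add (- x - y) h.
by rewrite addrA subrr add0r addrCA subrr addr0.
Qed.

Lemma subr_rge0 x y : rle 0 (y - x) -> rle x y.
Proof. by move=> h; have := rle_add x h; rewrite add0r subrK. Qed.

Lemma rle_addr_ge0 x y : rle 0 y -> rle x (x + y).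
Proof. by move=> h; have := rle_addl x h; rewrite addr0. Qed.

Lemma addr_rge0 x y : rle 0 x -> rle 0 y -> rle 0 (x + y).
Proof. by move=> hx hy; apply: rle_trans hx _; apply: rle_addr_ge0. Qed.

Lemma scaler_rge0 (a : R) x : 0 <= a -> rle 0 x -> rle 0 (a *: x).
Proof. by move=> ha hx; have := rle_scale ha hx; rewrite scaler0. Qed.

Lemma sumr_rge0 (I : Type) (s : seq I) (P : pred I) (F : I -> E) :
  (forall i, rle 0 (F i)) -> rle 0 (\sum_(i <- s | P i) F i).
Proof. by move=> h; elim/big_ind: _ => //; [apply: rle_refl|apply: addr_rge0]. Qed.

Lemma rjoinC x y : rjoin x y = rjoin y x.
Proof. by apply: rle_anti; apply: rjoin_least; apply: rjoin_ub1 || apply: rjoin_ub2. Qed.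

Lemma rmeetC x y : rmeet x y = rmeet y x.
Proof. by apply: rle_anti; apply: rmeet_greatest; apply: rmeet_lb1 || apply: rmeet_lb2. Qed.

Lemma rjoin_idPr x y : rle x y -> rjoin x y = y.
Proof.
by move=> h; apply: rle_anti; [apply: rjoin_least => //; apply: rle_refl|apply: rjoin_ub2].
Qed.

Lemma rmeet_idPl x y : rle x y -> rmeet x y = x.
Proof.
by move=> h; apply: rle_anti; [apply: rmeet_lb1|apply: rmeet_greatest => //; apply: rle_refl].
Qed.

Lemma rmeet_le x y x' y' : rle x x' -> rle y y' -> rle (rmeet x y) (rmeet x' y').
Proof.
move=> h1 h2; apply: rmeet_greatest.
  by apply: rle_trans h1; apply: rmeet_lb1.
by apply: rle_trans h2; apply: rmeet_lb2.
Qed.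

Lemma rmeet_addl x y z : rmeet (z + x) (z + y) = z + rmeet x y.
Proof.
apply: rle_anti; last first.
  by apply: rmeet_greatest; apply: rle_addl; [apply: rmeet_lb1|apply: rmeet_lb2].
have le_sub w : rle (rmeet (z + x) (z + y)) (z + w) -> rle (rmeet (z + x) (z + y) - z) w.
  by move=> h; have := rle_add (- z) h; rewrite [z + w]addrC addrK.
have h : rle (rmeet (z + x) (z + y) - z) (rmeet x y).
  by apply: rmeet_greatest; apply: le_sub; [apply: rmeet_lb1|apply: rmeet_lb2].
by have := rle_addl z h; rewrite addrC subrK.
Qed.

Lemma ropp_join x y : - rjoin x y = rmeet (- x) (- y).
Proof.
apply: rle_anti.
  by apply: rmeet_greatest; apply: rle_opp; [apply: rjoin_ub1|apply: rjoin_ub2].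
rewrite -[rmeet _ _]opprK; apply: rle_opp; apply: rjoin_least.
  by have := rle_opp (rmeet_lb1 (- x) (- y)); rewrite opprK.
by have := rle_opp (rmeet_lb2 (- x) (- y)); rewrite opprK.
Qed.

Lemma rmeetE x y : rmeet x y = x + y - rjoin x y.
Proof.
rewrite ropp_join -rmeet_addl rmeetC.
by rewrite addrAC subrr add0r -addrA subrr addr0.
Qed.

Lemma rmeet_addl_ge0 x y z : rle 0 x -> rle 0 y -> rle 0 z ->
  rle (rmeet (x + y) z) (rmeet x z + rmeet y z).
Proof.
move=> hx hy hz.
have addm (u v w : E) : rmeet u v + w = rmeet (u + w) (v + w).
  by rewrite addrC -rmeet_addl ![w + _]addrC.
rewrite -rmeet_addl !addm.
apply: rmeet_greatest; apply: rmeet_greatest.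
- by rewrite addrC; apply: rmeet_lb1.
- by apply: rle_trans (rmeet_lb2 _ _) _; apply: rle_addr_ge0.
- by apply: rle_trans (rmeet_lb2 _ _) _; rewrite addrC; apply: rle_addr_ge0.
- by apply: rle_trans (rmeet_lb2 _ _) _; apply: rle_addr_ge0.
Qed.

Lemma rmeetDl_eq0 x y z : rle 0 x -> rle 0 y -> rle 0 z ->
  rmeet x z = 0 -> rmeet y z = 0 -> rmeet (x + y) z = 0.
Proof.
move=> hx hy hz hxz hyz; apply: rle_anti; last by apply: rmeet_greatest => //; apply: addr_rge0.
by have := rmeet_addl_ge0 hx hy hz; rewrite hxz hyz addr0.
Qed.

Lemma rmeet_suml_eq0 (I : Type) (s : seq I) (F : I -> E) z : rle 0 z ->
  (forall i, rle 0 (F i)) -> (forall i, rmeet (F i) z = 0) ->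
  rmeet (\sum_(i <- s) F i) z = 0.
Proof.
move=> hz hF h; suff [] : rle 0 (\sum_(i <- s) F i) /\ rmeet (\sum_(i <- s) F i) z = 0 by [].
elim/big_ind: _ => [|u v [hu huz] [hv hvz]|i _]; last by split.
  by split; [apply: rle_refl|apply: rmeet_idPl].
by split; [apply: addr_rge0|apply: rmeetDl_eq0].
Qed.

Lemma rmeetZl_eq0 (a : R) x z : 0 <= a -> rle 0 x -> rle 0 z -> rmeet x z = 0 ->
  rmeet (a *: x) z = 0.
Proof.
move=> ha hx hz hxz; apply: rle_anti; last by apply: rmeet_greatest => //; apply: scaler_rge0.
have [n /ltW an] : exists n : nat, a < n%:R by exists (Num.bound a); apply: archi_boundP.
have -> : 0 = rmeet (\sum_(i < n) x) z by rewrite rmeet_suml_eq0.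
apply: rmeet_le; last exact: rle_refl.
rewrite sumr_const card_ord -scaler_nat; apply: subr_rge0.
by rewrite -scalerBl; apply: scaler_rge0; rewrite ?subr_ge0.
Qed.

Lemma rmeetZ_eq0 (a b : R) x z : 0 <= a -> 0 <= b -> rle 0 x -> rle 0 z ->
  rmeet x z = 0 -> rmeet (a *: x) (b *: z) = 0.
Proof.
move=> ha hb hx hz hxz; apply: rmeetZl_eq0 => //; first exact: scaler_rge0.
by rewrite rmeetC rmeetZl_eq0 // rmeetC.
Qed.

Definition disjoint_family (I : finType) (u : I -> E) :=
  (forall i, rle 0 (u i)) /\ (forall i j, i != j -> rmeet (u i) (u j) = 0).

End RieszLattice.

Section DisjointFamily.
Variables (R : realType) (E : RieszSpace R) (I : finType) (u : I -> E).
Hypothesis u_disj : disjoint_family u.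
Local Notation comb c := (\sum_i c i *: u i).

Let u_ge0 i : rle 0 (u i). Proof. exact: u_disj.1. Qed.

Lemma comb_rge0 (c : I -> R) : (forall i, 0 <= c i) -> rle 0 (comb c).
Proof. by move=> hc; apply: sumr_rge0 => i; apply: scaler_rge0. Qed.

Lemma comb_meet_eq0 (c d : I -> R) : (forall i, 0 <= c i) -> (forall i, 0 <= d i) ->
  (forall i, c i = 0 \/ d i = 0) -> rmeet (comb c) (comb d) = 0.
Proof.
move=> hc hd hcd.
apply: rmeet_suml_eq0 => [|i|i]; [exact: comb_rge0|exact: scaler_rge0|].
rewrite rmeetC; apply: rmeet_suml_eq0 => [|j|j]; [exact: scaler_rge0|exact: scaler_rge0|].
have [->|ji] := eqVneq j i; last exact: rmeetZ_eq0 (u_disj.2 _ _ ji).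
case: (hcd i) => ->; rewrite scale0r; last by apply: rmeet_idPl; apply: scaler_rge0.
by rewrite rmeetC; apply: rmeet_idPl; apply: scaler_rge0.
Qed.

Lemma comb_join (c d : I -> R) :
  rjoin (comb c) (comb d) = comb (fun i => Num.max (c i) (d i)).
Proof.
set m := comb _; apply/eqP; rewrite eq_sym -subr_eq0; apply/eqP.
rewrite ropp_join -rmeet_addl -!sumrB.
under eq_bigr do rewrite -scalerBl.
under [X in rmeet _ X]eq_bigr do rewrite -scalerBl.
apply: comb_meet_eq0 => i; rewrite ?subr_ge0 ?le_max ?lexx ?orbT //.
by case: leP => _; [right|left]; rewrite subrr.
Qed.

Lemma comb_ge0_eq0 (c : I -> R) : (forall i, 0 <= c i) -> comb c = 0 ->
  forall i, c i *: u i = 0.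
Proof.
move=> hc hc0 i; apply: rle_anti; last exact: scaler_rge0.
rewrite -hc0 (bigD1 i) //=; apply: rle_addr_ge0.
by apply: sumr_rge0 => j; apply: scaler_rge0.
Qed.

Lemma comb_rge0_coef (c : I -> R) : rle 0 (comb c) -> forall i, 0 <= c i \/ u i = 0.
Proof.
move=> hc i.
have : comb (fun i => Num.max (- c i) 0) = 0.
  rewrite -(comb_join _ (fun=> 0)) [X in rjoin _ X]big1 => [|j _]; last exact: scale0r.
  under eq_bigr do rewrite scaleNr.
  by rewrite sumrN rjoin_idPr //; have := rle_opp hc; rewrite oppr0.
have max_ge0 j : 0 <= Num.max (- c j) 0 by rewrite le_max lexx orbT.
move=> /(comb_ge0_eq0 max_ge0) /(_ i) /eqP; rewrite scaler_eq0 => /orP[|/eqP]; last by right.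
by rewrite eq_le ge_max => /andP[/andP[]]; rewrite oppr_le0; left.
Qed.

Lemma comb_eq0 (c : I -> R) : comb c = 0 -> forall i, c i = 0 \/ u i = 0.
Proof.
move=> hc0 i.
have hp : rle 0 (comb c) by rewrite hc0; apply: rle_refl.
have hn : rle 0 (comb (fun i => - c i)).
  by under eq_bigr do rewrite scaleNr; rewrite sumrN hc0 oppr0; apply: rle_refl.
case: (comb_rge0_coef hp i) => [c_ge0|]; last by right.
case: (comb_rge0_coef hn i) => [|]; last by right.
by rewrite oppr_ge0 => c_le0; left; apply/eqP; rewrite eq_le c_le0 c_ge0.
Qed.

Lemma comb_eq0_transfer (V : lmodType R) (v : I -> V) (c : I -> R) :
  (forall i, u i = 0 -> v i = 0) -> comb c = 0 -> \sum_i c i *: v i = 0.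
Proof.
move=> uv /comb_eq0 hc0; apply: big1 => i _.
by case: (hc0 i) => [->|/uv ->]; rewrite ?scale0r ?scaler0.
Qed.

End DisjointFamily.

Section RieszHom.
Variables (R : realType) (E F : RieszSpace R) (T : E -> F).
Hypothesis T_hom : riesz_hom T.

Lemma riesz_hom_meet x y : T (rmeet x y) = rmeet (T x) (T y).
Proof.
have T_lin : linear T by exact: T_hom.1.
by rewrite !rmeetE linear_mapB // linear_mapD // T_hom.2.
Qed.

Lemma riesz_hom_rge0 x : rle 0 x -> rle 0 (T x).
Proof.
move=> hx; rewrite -(rjoin_idPr hx) rjoinC T_hom.2 (linear_map0 T_hom.1).
exact: rjoin_ub2.
Qed.

End RieszHom.

Lemma riesz_hom_comp (R : realType) (E F G : RieszSpace R) (S : E -> F) (T : F -> G) :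
  riesz_hom S -> riesz_hom T -> riesz_hom (T \o S).
Proof.
move=> [S_lin S_join] [T_lin T_join]; split=> [a x y|x y] /=.
  by rewrite S_lin T_lin.
by rewrite S_join T_join.
Qed.

Lemma fremlin_hom_id (R : realType) (E F G : RieszSpace R) (tp : E -> F -> G) (S : G -> G) :
  fremlin_tensor_product tp -> riesz_hom S -> (forall x y, S (tp x y) = tp x y) -> S = id.
Proof.
move=> [archG tp_bim univ] S_hom S_tp.
have [T [_ T_uniq]] := univ G tp archG tp_bim.
by rewrite -(T_uniq S) ?(T_uniq id) //; split.
Qed.

Lemma riesz_bimorphism_flip (R : realType) (E F H : RieszSpace R) (phi : E -> F -> H) :
  riesz_bimorphism phi -> riesz_bimorphism (fun y x => phi x y).
Proof. by case. Qed.

Lemma bilinear_sum (R : pzRingType) (U V W : lmodType R) (phi : U -> V -> W)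
    (I J : Type) (s : seq I) (t : seq J) (al : I -> R) (be : J -> R)
    (X : I -> U) (Y : J -> V) :
  (forall y, linear (phi^~ y)) -> (forall x, linear (phi x)) ->
  phi (\sum_(i <- s) al i *: X i) (\sum_(j <- t) be j *: Y j) =
  \sum_(i <- s) \sum_(j <- t) (al i * be j) *: phi (X i) (Y j).
Proof.
move=> linl linr; rewrite (linear_map_sum (linl _)); apply: eq_bigr => i _.
rewrite (linear_mapZ (linl _)) (linear_map_sum (linr _)) scaler_sumr.
by apply: eq_bigr => j _; rewrite (linear_mapZ (linr _)) scalerA.
Qed.

Section Bimorphism.
Variables (R : realType) (E F H : RieszSpace R) (phi : E -> F -> H).
Hypothesis phi_bim : riesz_bimorphism phi.

Lemma bimorphism_rge0 x y : rle 0 x -> rle 0 y -> rle 0 (phi x y).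
Proof. by case: phi_bim => _ _ hom _ hx; apply: (riesz_hom_rge0 (hom x hx)). Qed.

Lemma bimorphism_meetl_eq0 x x' y y' : rle 0 x -> rle 0 x' -> rle 0 y -> rle 0 y' ->
  rmeet x x' = 0 -> rmeet (phi x y) (phi x' y') = 0.
Proof.
case: phi_bim => linr linl _ homl hx hx' hy hy' hxx'.
apply: rle_anti; last by apply: rmeet_greatest; apply: bimorphism_rge0.
have hyy' : rle 0 (y + y') by apply: addr_rge0.
have <- : rmeet (phi x (y + y')) (phi x' (y + y')) = 0.
  by rewrite -(riesz_hom_meet (homl _ hyy')) hxx' (linear_map0 (linl _)).
apply: rmeet_le; rewrite (linear_mapD (linr _)).
  by apply: rle_addr_ge0; apply: bimorphism_rge0.
by rewrite addrC; apply: rle_addr_ge0; apply: bimorphism_rge0.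
Qed.

End Bimorphism.

Lemma bimorphism_disjoint_family (R : realType) (E F H : RieszSpace R)
    (phi : E -> F -> H) (I J : finType) (u : I -> E) (v : J -> F) :
  riesz_bimorphism phi -> disjoint_family u -> disjoint_family v ->
  disjoint_family (fun p : I * J => phi (u p.1) (v p.2)).
Proof.
move=> phi_bim [u_ge0 u_disj] [v_ge0 v_disj]; split=> [p|[i j] [i' j'] /=].
  exact: bimorphism_rge0.
have [<-|ii'] := eqVneq i i'.
  rewrite xpair_eqE eqxx /= => jj'.
  exact: (bimorphism_meetl_eq0 (riesz_bimorphism_flip phi_bim) _ _ _ _ (v_disj _ _ jj')).
by move=> _; apply: bimorphism_meetl_eq0 (u_disj _ _ ii').
Qed.


Definition spans (R : pzRingType) (V : lmodType R) (I : finType) (u : I -> V) (x : V) :=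
  exists c : I -> R, x = \sum_i c i *: u i.

Section BilinearGrid.
Variables (R : realType) (E F H : RieszSpace R) (phi : E -> F -> H).
Hypotheses (phi_linl : forall y, linear (phi^~ y)) (phi_linr : forall x, linear (phi x)).
Variables (I J : finType) (u : I -> E) (v : J -> F).
Hypotheses (u_disj : disjoint_family u) (v_disj : disjoint_family v).
Hypothesis uv_disj : disjoint_family (fun p : I * J => phi (u p.1) (v p.2)).

Lemma bilinear_comb (al : I -> R) (be : J -> R) :
  phi (\sum_i al i *: u i) (\sum_j be j *: v j) =
  \sum_(p : I * J) (al p.1 * be p.2) *: phi (u p.1) (v p.2).
Proof. by rewrite bilinear_sum // pair_bigA. Qed.

Lemma bilinear_grid_joinr x y y' : rle 0 x -> spans u x -> spans v y -> spans v y' ->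
  phi x (rjoin y y') = rjoin (phi x y) (phi x y').
Proof.
move=> hx [al ex] [be ->] [be' ->]; rewrite ex in hx *.
rewrite (comb_join v_disj) !bilinear_comb (comb_join uv_disj); apply: eq_bigr => p _.
have [al_ge0|u0] := comb_rge0_coef u_disj hx p.1; first by rewrite maxr_pMr.
by rewrite u0 (linear_map0 (phi_linl _)) !scaler0.
Qed.

End BilinearGrid.

Lemma disjoint_family_swap (R : realType) (E : RieszSpace R) (I J : finType)
    (w : I * J -> E) :
  disjoint_family w -> disjoint_family (fun q : J * I => w (q.2, q.1)).
Proof.
move=> [w_ge0 w_disj]; split=> [q|[j i] [j' i'] ne]; first exact: w_ge0.
by apply: w_disj; apply: contra ne; rewrite !xpair_eqE andbC.
Qed.

Lemma riesz_bimorphism_of_grids (R : realType) (E F H : RieszSpace R)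
    (phi : E -> F -> H) :
  (forall y, linear (phi^~ y)) -> (forall x, linear (phi x)) ->
  (forall x x' y y', exists (I J : finType) (u : I -> E) (v : J -> F),
    [/\ disjoint_family u, disjoint_family v,
        disjoint_family (fun p : I * J => phi (u p.1) (v p.2)) &
        [/\ spans u x, spans u x', spans v y & spans v y']]) ->
  riesz_bimorphism phi.
Proof.
move=> linl linr grid; split=> // [x hx|y hy].
  split=> [|y y']; first exact: linr.
  have [I [J [u [v [u_disj v_disj uv_disj [hx1 _ hy1 hy2]]]]]] := grid x x y y'.
  by apply: (bilinear_grid_joinr linl linr u_disj v_disj uv_disj hx hx1 hy1 hy2).
split=> [|x x']; first exact: linl.
have [I [J [u [v [u_disj v_disj uv_disj [hx1 hx2 hy1 _]]]]]] := grid x x' y y.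
by apply: (bilinear_grid_joinr (phi := fun y x => phi x y) linr linl v_disj u_disj
  (disjoint_family_swap uv_disj) hy hy1 hx1 hx2).
Qed.

(** * Linear extension from a spanning family *)

Section LinearCombination.
Variables (R : pzRingType) (X : Type) (V : lmodType R).
Implicit Types (g : X -> V) (s : seq (R * X)).

Definition lincomb g s : V := \sum_(p <- s) p.1 *: g p.2.

Lemma lincomb_cat g s t : lincomb g (s ++ t) = lincomb g s + lincomb g t.
Proof. exact: big_cat. Qed.

Lemma lincomb_scale g k s : lincomb g [seq (k * p.1, p.2) | p <- s] = k *: lincomb g s.
Proof. by rewrite /lincomb big_map scaler_sumr; apply: eq_bigr => p _; rewrite scalerA. Qed.

End LinearCombination.

Lemma linear_lincomb (R : pzRingType) (X : Type) (V W : lmodType R) (T : V -> W)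
    (g : X -> V) (s : seq (R * X)) :
  linear T -> T (lincomb g s) = lincomb (T \o g) s.
Proof.
by move=> T_lin; rewrite (linear_map_sum T_lin); apply: eq_bigr => p _; rewrite (linear_mapZ T_lin).
Qed.

Section SpanExtension.
Variables (R : pzRingType) (X : Type) (E V : lmodType R) (g : X -> E) (f : X -> V).
Hypothesis g_span : forall x : E, exists s, x = lincomb g s.

Lemma linear_eq_on_span (T1 T2 : E -> V) : linear T1 -> linear T2 ->
  (forall a, T1 (g a) = T2 (g a)) -> T1 =1 T2.
Proof.
move=> T1_lin T2_lin eqT x; have [s ->] := g_span x.
by rewrite !linear_lincomb //; apply: eq_bigr => p _ /=; rewrite eqT.
Qed.

Hypothesis fg_compat : forall s, lincomb g s = 0 -> lincomb f s = 0.

(* Independent of the chosen representation of [x] by [fg_compat]. *)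
Definition span_ext (x : E) : V := lincomb f (projT1 (cid (g_span x))).

Lemma span_ext_lincomb s : span_ext (lincomb g s) = lincomb f s.
Proof.
rewrite /span_ext; case: cid => t /= eq_ts.
have neg (Y : lmodType R) (h : X -> Y) : lincomb h [seq (-1 * p.1, p.2) | p <- s] = - lincomb h s.
  by rewrite lincomb_scale scaleN1r.
apply/eqP; rewrite -subr_eq0 -neg -lincomb_cat; apply/eqP/fg_compat.
by rewrite lincomb_cat neg -eq_ts subrr.
Qed.

Lemma span_ext_gen a : span_ext (g a) = f a.
Proof. by have := span_ext_lincomb [:: (1, a)]; rewrite /lincomb !big_seq1 !scale1r. Qed.

Lemma span_ext_linear : linear span_ext.
Proof.
move=> k x y; have [s ->] := g_span x; have [t ->] := g_span y.
by rewrite -lincomb_scale -lincomb_cat !span_ext_lincomb lincomb_cat lincomb_scale.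
Qed.

End SpanExtension.

(** * Boolean algebras and their Stone spaces *)

Section Atoms.
Variables (d : Order.disp_t) (A : ctbDistrLatticeType d).
Local Open Scope order_scope.
Implicit Types (a b t x : A) (L : seq A).

(* The atoms of the subalgebra generated by [L], possibly with repetitions and [\bot]. *)
Fixpoint atoms L : seq A :=
  if L is a :: L' then [seq t `&` a | t <- atoms L'] ++ [seq t `&` ~` a | t <- atoms L']
  else [:: \top].

Lemma atoms_pairwise L : pairwise (fun x y => x `&` y == \bot) (atoms L).
Proof.
elim: L => [|a L IH] //=; rewrite pairwise_cat !pairwise_map; apply/and3P; split.
- rewrite allrel_mapl allrel_mapr; apply/allrelP => x y _ _.
  by rewrite meetACA meetxC meetx0.
- by apply: sub_pairwise IH => x y /eqP; rewrite /relpre /= meetACA meetxx => ->; rewrite meet0x.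
- by apply: sub_pairwise IH => x y /eqP; rewrite /relpre /= meetACA meetxx => ->; rewrite meet0x.
Qed.

Lemma atoms_le_or_disjoint L a t : a \in L -> t \in atoms L -> t <= a \/ t `&` a = \bot.
Proof.
elim: L t => [|b L IH] t //=; rewrite inE mem_cat => /orP[/eqP ->|aL] /orP[] /mapP[s sL ->].
- by left; rewrite leIr.
- by right; rewrite -meetA meetCx meetx0.
- by case: (IH _ aL sL) => h; [left; apply: le_trans h; rewrite leIl|
                              right; rewrite meetAC h meet0x].
- by case: (IH _ aL sL) => h; [left; apply: le_trans h; rewrite leIl|
                              right; rewrite meetAC h meet0x].
Qed.

Definition atom L (i : 'I_(size (atoms L))) : A := nth \bot (atoms L) i.

Lemma atom_disjoint L (i j : 'I_(size (atoms L))) : i != j -> atom i `&` atom j = \bot.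
Proof.
move=> ij; have /(pairwiseP \bot) P := atoms_pairwise L.
have [lt|gt|eq] := ltngtP i j.
- by apply/eqP; apply: P; rewrite ?inE.
- by rewrite meetC; apply/eqP; apply: P; rewrite ?inE.
- by move: ij; rewrite -val_eqE /= eq eqxx.
Qed.

Definition boolean_additive (V : zmodType) (f : A -> V) :=
  forall a b, a `&` b = \bot -> f (a `|` b) = (f a + f b)%R.

Section Additive.
Variables (V : zmodType) (f : A -> V).
Hypothesis f_add : boolean_additive f.

Lemma boolean_additive0 : f \bot = 0%R.
Proof.
have := f_add (meetxx \bot); rewrite joinxx => /eqP.
by rewrite -subr_eq0 opprD addrA subrr add0r oppr_eq0 => /eqP.
Qed.

Lemma boolean_additive_split x a : f x = (f (x `&` a) + f (x `&` ~` a))%R.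
Proof.
rewrite -f_add; first by rewrite -meetUr joinxC meetx1.
by rewrite meetACA meetxx meetxC meetx0.
Qed.

Lemma boolean_additive_atoms L x : f x = (\sum_(t <- atoms L) f (x `&` t))%R.
Proof.
elim: L x => [|a L IH] x /=; first by rewrite big_seq1 meetx1.
rewrite big_cat !big_map /= IH -big_split /=; apply: eq_bigr => t _.
by rewrite !meetA -boolean_additive_split.
Qed.

Lemma boolean_additive_top L : f \top = (\sum_(i < size (atoms L)) f (atom i))%R.
Proof.
rewrite (boolean_additive_atoms L) (big_nth \bot) big_mkord.
by apply: eq_bigr => i _; rewrite meet1x.
Qed.

End Additive.

Section AtomExpansion.
Variables (R : pzRingType) (V : lmodType R) (f : A -> V) (L : seq A).
Hypothesis f_add : boolean_additive f.

Lemma boolean_additive_expand a : a \in L ->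
  f a = (\sum_i (@atom L i <= a)%O%:R *: f (atom i))%R.
Proof.
move=> aL; rewrite (boolean_additive_atoms f_add L a) (big_nth \bot) big_mkord.
apply: eq_bigr => i _; rewrite -/(atom i).
case: (boolP (atom i <= a)) => [ia|nia]; first by rewrite scale1r meetC (meet_idPl ia).
rewrite scale0r meetC; case: (atoms_le_or_disjoint aL (mem_nth \bot (ltn_ord i))) => h.
  by move: nia; rewrite /atom h.
by rewrite /atom h (boolean_additive0 f_add).
Qed.

Definition atom_coef (s : seq (R * A)) (i : 'I_(size (atoms L))) : R :=
  (\sum_(p <- s) p.1 * (atom i <= p.2)%O%:R)%R.

Lemma lincomb_atoms (s : seq (R * A)) : (forall p, p \in s -> p.2 \in L) ->
  lincomb f s = (\sum_i atom_coef s i *: f (atom i))%R.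
Proof.
move=> sL; rewrite /lincomb big_seq.
under eq_bigr => p ps do rewrite (boolean_additive_expand (sL p ps)) scaler_sumr.
rewrite -big_seq exchange_big /=; apply: eq_bigr => i _.
by rewrite /atom_coef scaler_suml; apply: eq_bigr => p _; rewrite scalerA.
Qed.

End AtomExpansion.

End Atoms.

Section StonePoint.
Variables (d : Order.disp_t) (A : ctbDistrLatticeType d) (z : A -> bool).
Hypothesis z_point : stone_point z.
Local Open Scope order_scope.
Implicit Types a b : A.

Lemma stone_point_meet a b : z (a `&` b) = z a && z b.
Proof. by case: z_point. Qed.

Lemma stone_point_bot : z \bot = false.
Proof.
case: z_point => z_sym _ [a _]; have := z_sym a a.
by rewrite /symdiff diffxx joinxx; case: (z a).
Qed.

Lemma stone_point_top : z \top.
Proof. by case: z_point => _ _ [a]; rewrite -[a]meetx1 stone_point_meet => /andP[]. Qed.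

Lemma stone_point_compl a : z (~` a) = ~~ z a.
Proof.
case: z_point => z_sym _ _; have := z_sym \top a.
by rewrite /symdiff !diffE meet1x compl1 meetx0 joinx0 stone_point_top.
Qed.

Lemma stone_point_join a b : z (a `|` b) = z a || z b.
Proof.
rewrite -[a `|` b]complK complU stone_point_compl stone_point_meet !stone_point_compl.
by rewrite negb_and !negbK.
Qed.

Lemma stone_point_meets (s : seq A) : z (\meet_(x <- s) x) = all z s.
Proof.
elim: s => [|x s IH]; first by rewrite big_nil stone_point_top.
by rewrite big_cons stone_point_meet IH.
Qed.

End StonePoint.

Section StoneRepresentation.
Variables (d : Order.disp_t) (A : ctbDistrLatticeType d).
Local Open Scope classical_set_scope.
Implicit Types a b : A.

Lemma stone_hatI a b : stone_hat (a `&` b)%O = stone_hat a `&` stone_hat b.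
Proof.
apply/seteqP; split=> p;
  by rewrite /stone_hat /= (stone_point_meet (proj2_sig p)) => /andP.
Qed.

Lemma stone_hatU a b : stone_hat (a `|` b)%O = stone_hat a `|` stone_hat b.
Proof.
apply/seteqP; split=> p;
  by rewrite /stone_hat /= (stone_point_join (proj2_sig p)) => /orP.
Qed.

Lemma stone_hat0 : stone_hat (\bot%O : A) = set0.
Proof.
by apply/seteqP; split=> p //; rewrite /stone_hat (stone_point_bot (proj2_sig p)).
Qed.

Lemma stone_hat1 : stone_hat (\top%O : A) = setT.
Proof.
by apply/seteqP; split=> p //; rewrite /stone_hat (stone_point_top (proj2_sig p)).
Qed.

Lemma stone_hatC a : stone_hat (~` a)%O = ~` stone_hat a.
Proof.
apply/seteqP; split=> p;
  by rewrite /stone_hat /= (stone_point_compl (proj2_sig p)) => /negP.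
Qed.

End StoneRepresentation.

Section Ultrafilter.
Variables (d : Order.disp_t) (A : ctbDistrLatticeType d).
Local Open Scope order_scope.
Implicit Types (a b x y : A) (F G : A -> Prop).

Definition proper_filter F :=
  [/\ F \top, forall x y, F x -> F y -> F (x `&` y), forall x y, F x -> x <= y -> F y
    & ~ F \bot].

Lemma ultrafilter_stone_point F : proper_filter F -> (forall a, F a \/ F (~` a)) ->
  stone_point (fun a => `[< F a >]).
Proof.
move=> [F_top F_meet F_up F_bot] F_ultra.
have F_meetE a b : `[< F (a `&` b) >] = `[< F a >] && `[< F b >].
  apply/asboolP/andP => [Fab|[/asboolP Fa /asboolP Fb]]; last exact: F_meet.
  by split; apply/asboolP; apply: F_up Fab _; rewrite ?leIl ?leIr.
have F_complE a : `[< F (~` a) >] = ~~ `[< F a >].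
  have F_excl : F a -> F (~` a) -> False.
    by move=> Fa Fna; apply: F_bot; rewrite -(meetxC a); apply: F_meet.
  case: (F_ultra a) => h; rewrite (asboolT h).
    by apply/negbTE/asboolPn => /(F_excl h).
  by apply/esym/asboolPn => /F_excl /(_ h).
split=> [a b||]; last by exists \top; apply/asboolP.
- rewrite /symdiff !diffE -[_ `|` _]complK complU !(F_complE, F_meetE).
  by case: `[< F a >]; case: `[< F b >].
- exact: F_meetE.
Qed.

Lemma maximal_filter_ultra F : proper_filter F ->
  (forall G, proper_filter G -> (forall x, F x -> G x) -> forall x, G x -> F x) ->
  forall a, F a \/ F (~` a).
Proof.
move=> [F_top F_meet F_up F_bot] F_max a; have [Fa|nFa] := pselect (F a); first by left.
pose G x := exists2 f, F f & f `&` a <= x.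
have [[f Ff]|nG0] := pselect (G \bot).
  by rewrite lex0 => /eqP fa0; right; apply: F_up Ff _; rewrite -disj_leC fa0.
exfalso; apply: nFa; apply: (F_max G); last by exists \top; rewrite ?meet1x.
- split=> [|x y [f Ff fx] [g Fg gy]|x y [f Ff fx] xy|//]; first by exists \top; rewrite ?leIl.
    exists (f `&` g); first exact: F_meet.
    by rewrite lexI (le_trans _ fx) ?(le_trans _ gy) // leI2 ?leIl ?leIr.
  by exists f => //; apply: le_trans xy.
- by move=> x Fx; exists x; rewrite ?leIl.
Qed.

Section FiniteIntersectionProperty.
Variable Q : A -> Prop.
Hypothesis Q_fip : forall s : seq A, (forall x, x \in s -> Q x) -> \meet_(x <- s) x != \bot.

Let F0 x := exists2 s : seq A, (forall y, y \in s -> Q y) & \meet_(y <- s) y <= x.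

Let F0_filter : proper_filter F0.
Proof.
split=> [|x y [s sQ sx] [t tQ ty]|x y [s sQ sx] xy|[s sQ]].
- by exists [::] => //; rewrite big_nil.
- exists (s ++ t); last by rewrite big_cat leI2.
  by move=> w; rewrite mem_cat => /orP[/sQ|/tQ].
- by exists s => //; apply: le_trans xy.
- by rewrite lex0; apply/negP; apply: Q_fip.
Qed.

(* [Zorn_bigcup] needs [P set0], so [P] adds [F0] before asking for a proper filter. *)
Let P (X : set A) := proper_filter (fun x => F0 x \/ X x).

Let P_chain (C : set (set A)) : (C `<=` P)%classic -> total_on C subset ->
  P (\bigcup_(X in C) X)%classic.
Proof.
move=> CP Ctot; have [F0_top F0_meet F0_up F0_bot] := F0_filter.
have lift Y x : C Y -> F0 x \/ Y x -> F0 x \/ (\bigcup_(X in C) X)%classic x.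
  by move=> CY [|Yx]; [left|right; exists Y].
have common x y : F0 x \/ (\bigcup_(X in C) X)%classic x ->
    F0 y \/ (\bigcup_(X in C) X)%classic y ->
    (F0 x /\ F0 y) \/ exists2 Y, C Y & (F0 x \/ Y x) /\ (F0 y \/ Y y).
  move=> [Fx|[X CX Xx]] [Fy|[Y CY Yy]]; first by left.
  - by right; exists Y; [|split; [left|right]].
  - by right; exists X; [|split; [right|left]].
  - right; case: (Ctot _ _ CX CY) => XY; first by exists Y; [|split; right => //; apply: XY].
    by exists X; [|split; right => //; apply: XY].
split=> [|x y hx hy|x y [Fx|[X CX Xx]] xy|[F0bot|[X CX Xbot]]].
- by left.
- case: (common x y hx hy) => [[Fx Fy]|[Y CY [hx' hy']]]; first by left; apply: F0_meet.
  by have [_ meetY _ _] := CP _ CY; apply: lift CY _; apply: meetY.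
- by left; apply: F0_up xy.
- by have [_ _ upY _] := CP _ CX; apply: lift CX _; apply: upY xy; right.
- exact: F0_bot.
- by have [_ _ _ botX] := CP _ CX; apply: botX; right.
Qed.

Lemma ultrafilter_exists : exists p : stone_space A, forall x, Q x -> stone_hat x p.
Proof.
have [X [PX X_max]] := Zorn_bigcup P_chain.
pose F x := F0 x \/ X x.
have F_max G : proper_filter G -> (forall x, F x -> G x) -> forall x, G x -> F x.
  move=> G_filter FG x Gx; apply: contrapT => nFx.
  apply: (X_max G); first split.
  - by move=> y Xy; apply: FG; right.
  - by move=> /(_ x Gx) Xx; apply: nFx; right.
  rewrite /P; suff -> : (fun y => F0 y \/ G y) = G by [].
  by apply: funext => y; apply: propext; split=> [[F0y|//]|Gy]; [apply: FG; left|right].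
have point := ultrafilter_stone_point PX (maximal_filter_ultra PX F_max).
exists (exist _ _ point) => x Qx; apply/asboolP; left.
by exists [:: x]; [move=> y; rewrite inE => /eqP ->|rewrite big_seq1].
Qed.

End FiniteIntersectionProperty.

End Ultrafilter.

Section StoneCompactness.
Variables (d : Order.disp_t) (A : ctbDistrLatticeType d).
Local Open Scope order_scope.

Lemma stone_hat_eq0 (a : A) : stone_hat a = set0 -> a = \bot.
Proof.
move=> hat0; apply/eqP; apply: contraT => a0.
have [|p pa] := @ultrafilter_exists _ A (eq a).
  move=> s sa; apply: contra a0 => /eqP s0; rewrite -lex0 -s0.
  by apply/meetsP_seq => x /sa <-.
by have := pa a erefl; rewrite hat0.
Qed.

Lemma atoms_hat_le L (t a : A) p : a \in L -> t \in atoms L ->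
  stone_hat t p -> stone_hat a p -> t <= a.
Proof.
move=> aL tL pt pa; case: (atoms_le_or_disjoint aL tL) => // ta0.
have : stone_hat (t `&` a) p by rewrite stone_hatI.
by rewrite ta0 stone_hat0.
Qed.

Lemma stone_compact (P : A -> Prop) :
  (forall p : stone_space A, exists2 a, P a & stone_hat a p) ->
  exists2 s : seq A, (forall a, a \in s -> P a) &
    forall p : stone_space A, exists2 a, a \in s & stone_hat a p.
Proof.
move=> cover; apply: contrapT => no_sub.
have [s sP|p pQ] := @ultrafilter_exists _ A (fun x => P (~` x)).
  apply/negP => /eqP s0; apply: no_sub; exists (map Order.compl s).
    by move=> a /mapP[x xs ->]; apply: sP.
  move=> p; have := stone_point_meets (proj2_sig p) s.
  rewrite s0 (stone_point_bot (proj2_sig p)) => /esym/negbT/allPn[x xs px].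
  by exists (~` x); [apply: map_f|rewrite stone_hatC; apply/negP].
have [a Pa pa] := cover p; have := pQ (~` a); rewrite complK stone_hatC.
by move=> /(_ Pa); apply.
Qed.

End StoneCompactness.

(** * Caratheodory spaces *)

Section CaratheodoryGen.
Variables (R : realType) (T : Type) (dom : T -> Prop).
Variables (meetT joinT : T -> T -> T) (complT : T -> T) (botT topT : T).
Variables (E : RieszSpace R) (e : E) (chi : T -> E).
Hypothesis chi_carat : caratheodory_space_gen dom meetT joinT complT botT topT e chi.

Lemma carat_meet a b : dom a -> dom b -> chi (meetT a b) = rmeet (chi a) (chi b).
Proof. by case: chi_carat => _ _ [_ [meet _ _ _]] _; apply: meet. Qed.

Lemma carat_join a b : dom a -> dom b -> chi (joinT a b) = rjoin (chi a) (chi b).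
Proof. by case: chi_carat => _ _ [_ [_ join _ _]] _; apply: join. Qed.

Lemma carat_bot : chi botT = 0.
Proof. by case: chi_carat => _ _ [_ [_ _ _ []]]. Qed.

Lemma carat_rge0 a : dom a -> rle 0 (chi a).
Proof. by case: chi_carat => _ _ [[comp _ _] _] _ /comp []. Qed.

Lemma carat_inj a b : dom a -> dom b -> chi a = chi b -> a = b.
Proof. by case: chi_carat => _ _ [[_ _ inj] _] _; apply: inj. Qed.

Lemma carat_add a b : dom a -> dom b -> meetT a b = botT ->
  chi (joinT a b) = chi a + chi b.
Proof.
move=> da db ab0; have := rmeetE (chi a) (chi b).
by rewrite -carat_meet // ab0 carat_bot carat_join // => /esym/eqP; rewrite subr_eq0 => /eqP.
Qed.

Lemma carat_span_ind (P : E -> Prop) : P 0 ->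
  (forall c a x, dom a -> P x -> P (c *: chi a + x)) -> forall x, P x.
Proof.
case: chi_carat => _ _ [[_ surj _] _] span P0 PS x.
have [s [s_comp ->]] := span x; elim: s s_comp => [|[c y] s IH] s_comp.
  by rewrite big_nil.
have [a da ay] := surj y (s_comp 0%N isT).
by rewrite big_cons /= -ay; apply: PS => //; apply: IH => i; apply: (s_comp i.+1).
Qed.

End CaratheodoryGen.

Section Caratheodory.
Variables (R : realType) (d : Order.disp_t) (A : ctbDistrLatticeType d).
Variables (E : RieszSpace R) (e : E) (chi : A -> E).
Hypothesis chi_carat : caratheodory_space e chi.

Lemma carat_additive : boolean_additive chi.
Proof. by move=> a b; apply: (carat_add chi_carat). Qed.

Lemma carat_eq0 a : chi a = 0 -> a = \bot%O.
Proof. by rewrite -(carat_bot chi_carat); apply: (carat_inj chi_carat). Qed.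

Lemma carat_span x : exists s, x = lincomb chi s.
Proof.
elim/(carat_span_ind chi_carat): x => [|c a _ _ [s ->]].
  by exists [::]; rewrite /lincomb big_nil.
by exists ((c, a) :: s); rewrite /lincomb big_cons.
Qed.

Lemma carat_atoms_disjoint L : disjoint_family (fun i => chi (@atom _ A L i)).
Proof.
split=> [i|i j ij]; first exact: (carat_rge0 chi_carat).
by rewrite -(carat_meet chi_carat) // atom_disjoint // (carat_bot chi_carat).
Qed.

Lemma carat_atoms_span2 x x' : exists L,
  spans (fun i => chi (@atom _ A L i)) x /\ spans (fun i => chi (@atom _ A L i)) x'.
Proof.
have [s ->] := carat_span x; have [s' ->] := carat_span x'.
pose L := map snd (s ++ s').
have sL (t : seq (R * A)) : {subset t <= s ++ s'} -> forall p, p \in t -> p.2 \in L.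
  by move=> ts p /ts; apply: map_f.
exists L; split; [exists (atom_coef s)|exists (atom_coef s')].
  by rewrite (lincomb_atoms carat_additive (sL _ (mem_subseq (prefix_subseq s s')))).
by rewrite (lincomb_atoms carat_additive (sL _ (mem_subseq (suffix_subseq s s')))).
Qed.

Section Extension.
Variables (V : lmodType R) (f : A -> V).
Hypothesis f_add : boolean_additive f.

Lemma carat_compat s : lincomb chi s = 0 -> lincomb f s = 0.
Proof.
have sL p : p \in s -> p.2 \in map snd s by move=> ps; apply: map_f.
rewrite (lincomb_atoms carat_additive sL) (lincomb_atoms f_add sL).
apply: (comb_eq0_transfer (carat_atoms_disjoint _) (v := fun i => f (atom i))).
by move=> i /carat_eq0 ->; apply: boolean_additive0.
Qed.

Definition carat_ext : E -> V := span_ext f carat_span.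

Lemma carat_ext_linear : linear carat_ext.
Proof. exact: span_ext_linear carat_span carat_compat. Qed.

Lemma carat_ext_chi a : carat_ext (chi a) = f a.
Proof. exact: span_ext_gen carat_span carat_compat a. Qed.

Lemma carat_ext_lincomb s : carat_ext (lincomb chi s) = lincomb f s.
Proof. exact: span_ext_lincomb carat_span carat_compat s. Qed.

End Extension.

Lemma carat_linear_eq (V : lmodType R) (T1 T2 : E -> V) : linear T1 -> linear T2 ->
  (forall a, T1 (chi a) = T2 (chi a)) -> T1 =1 T2.
Proof.
by move=> T1_lin T2_lin eqT; apply: (linear_eq_on_span carat_span T1_lin T2_lin eqT).
Qed.

End Caratheodory.

Section CaratheodoryBilinear.
Variables (R : realType) (dA dB : Order.disp_t).
Variables (A : ctbDistrLatticeType dA) (B : ctbDistrLatticeType dB).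
Variables (CA : RieszSpace R) (eA : CA) (chiA : A -> CA).
Variables (CB : RieszSpace R) (eB : CB) (chiB : B -> CB).
Hypotheses (hA : caratheodory_space eA chiA) (hB : caratheodory_space eB chiB).
Variables (V : lmodType R) (beta : A -> B -> V).
Hypotheses (beta_addl : forall b, boolean_additive (beta^~ b))
  (beta_addr : forall a, boolean_additive (beta a)).

Let ext_r a : CB -> V := carat_ext hB (beta a).

Let ext_r_addl y : boolean_additive (fun a => ext_r a y).
Proof.
move=> a a' aa'; pose add y := ext_r a y + ext_r a' y.
have add_lin : linear add.
  by move=> k u v; rewrite /add /ext_r !carat_ext_linear // scalerDr addrACA.
apply: (carat_linear_eq hB (carat_ext_linear _ _) add_lin) => // b.
by rewrite /add /ext_r !carat_ext_chi //; apply: beta_addl.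
Qed.

Definition carat_biext (x : CA) (y : CB) : V := carat_ext hA (fun a => ext_r a y) x.

Lemma carat_biext_chi a b : carat_biext (chiA a) (chiB b) = beta a b.
Proof. by rewrite /carat_biext (carat_ext_chi hA (ext_r_addl _)) /ext_r carat_ext_chi. Qed.

Lemma carat_biext_linl y : linear (carat_biext^~ y).
Proof. exact: carat_ext_linear. Qed.

Lemma carat_biext_linr x : linear (carat_biext x).
Proof.
have [s ->] := carat_span hA x; move=> k y y'.
rewrite /carat_biext !carat_ext_lincomb // /lincomb scaler_sumr -big_split.
by apply: eq_bigr => p _; rewrite /ext_r carat_ext_linear // scalerDr !scalerA mulrC.
Qed.

End CaratheodoryBilinear.

(** * Rectangles in the product of the Stone spaces *)

Lemma seq_choice (X Y : eqType) (s : seq X) (P : X -> Y -> Prop) :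
  (forall x, x \in s -> exists y, P x y) ->
  exists2 t : seq (X * Y), map fst t = s & forall q, q \in t -> P q.1 q.2.
Proof.
elim: s => [|x s IH] h; first by exists [::].
have [y Pxy] := h x (mem_head _ _).
have [t <- tP] := IH (fun x' x's => h x' (@mem_behead _ (x :: s) _ x's)).
by exists ((x, y) :: t) => // q; rewrite inE => /orP[/eqP ->|/tP].
Qed.

Section Rectangles.
Variables (dA dB : Order.disp_t) (A : ctbDistrLatticeType dA) (B : ctbDistrLatticeType dB).
Local Open Scope classical_set_scope.
Local Notation Z := (Z12 A B).
Implicit Types (a : A) (b : B) (U V : set Z).

Definition rect a b : set Z := stone_hat a `*` stone_hat b.

Lemma rectI a a' b b' : rect a b `&` rect a' b' = rect (a `&` a')%O (b `&` b')%O.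
Proof. by rewrite /rect !stone_hatI setXI. Qed.

Lemma rectUl a a' b : rect (a `|` a')%O b = rect a b `|` rect a' b.
Proof.
rewrite /rect stone_hatU; apply/seteqP.
by split=> [p [[pa|pa'] pb]|p [[pa pb]|[pa' pb]]]; [left|right|split; [left|]|split; [right|]].
Qed.

Lemma rectUr a b b' : rect a (b `|` b')%O = rect a b `|` rect a b'.
Proof.
rewrite /rect stone_hatU; apply/seteqP.
by split=> [p [pa [pb|pb']]|p [[pa pb]|[pa pb']]]; [left|right|split; [|left]|split; [|right]].
Qed.

Lemma rect0l b : rect \bot%O b = set0.
Proof. by rewrite /rect stone_hat0 set0X. Qed.

Lemma rect0r a : rect a \bot%O = set0.
Proof. by rewrite /rect stone_hat0 setX0. Qed.

Lemma rect11 : rect \top%O \top%O = setT.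
Proof. by rewrite /rect !stone_hat1 setXTT. Qed.

Lemma rect_eq0 a b : rect a b = set0 -> a = \bot%O \/ b = \bot%O.
Proof.
move=> ab0; have [/stone_hat_eq0|/eqP/set0P[p pa]] := pselect (stone_hat a = set0).
  by left.
right; apply: stone_hat_eq0; apply/seteqP; split=> // q qb.
by have : rect a b (p, q) by []; rewrite ab0.
Qed.

Local Notation clopen := (@prod_clopen _ _ A B).

Lemma prod_openP U : prod_open U <-> forall p, U p -> exists a b, rect a b p /\ rect a b `<=` U.
Proof.
split=> openU p /openU [a [b]].
  by case=> pa pb abU; exists a, b; split=> // q [qa qb]; apply: abU.
by case=> -[pa pb] abU; exists a, b; split=> // q qa qb; apply: abU.
Qed.

Lemma rect_clopen a b : clopen (rect a b).
Proof.
split; apply/prod_openP => p; first by move=> pab; exists a, b; split.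
have outside c d : rect c d `&` rect a b = set0 -> rect c d `<=` ~` rect a b.
  by move=> cd0 q qcd qab; have : (rect c d `&` rect a b) q by []; rewrite cd0.
have [pa|npa] := pselect (stone_hat a p.1) => nab.
  exists \top%O, (~` b)%O; split.
    by rewrite /rect stone_hat1 stone_hatC; split=> // pb; apply: nab.
  by apply: outside; rewrite rectI meetCx rect0r.
exists (~` a)%O, \top%O; split; first by rewrite /rect stone_hat1 stone_hatC.
by apply: outside; rewrite rectI meetCx rect0l.
Qed.

Lemma clopenI U V : clopen U -> clopen V -> clopen (U `&` V).
Proof.
move=> [/prod_openP oU /prod_openP oU'] [/prod_openP oV /prod_openP oV'].
split; apply/prod_openP => p; first move=> [/oU [a [b [pab abU]]] /oV [a' [b' [pab' abV]]]].
  exists (a `&` a')%O, (b `&` b')%O; rewrite -rectI; split=> //.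
  by move=> q [qab qab']; split; [apply: abU|apply: abV].
move=> /not_andP [/oU' [a [b [pab abU]]]|/oV' [a [b [pab abV]]]]; exists a, b; split=> //.
  by move=> q /abU nU [].
by move=> q /abV nV [].
Qed.

Lemma rect_le a a' b b' : (a <= a')%O -> (b <= b')%O -> rect a b `<=` rect a' b'.
Proof. by move=> /meet_idPl <- /meet_idPl <-; rewrite -rectI; apply: subIsetr. Qed.

Lemma clopenT : clopen setT.
Proof. by rewrite -rect11; apply: rect_clopen. Qed.

Lemma clopen0 : clopen set0.
Proof. by rewrite -(rect0l \top%O); apply: rect_clopen. Qed.

End Rectangles.

Section RectangleCovers.
Variables (dA dB : Order.disp_t) (A : ctbDistrLatticeType dA) (B : ctbDistrLatticeType dB).
Local Open Scope classical_set_scope.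
Local Notation Z := (Z12 A B).
Variable P : A -> B -> Prop.

Definition rect_cover (cov : seq (A * B)) :=
  (forall q, q \in cov -> P q.1 q.2) /\ forall p : Z, exists2 q, q \in cov & rect q.1 q.2 p.

Lemma rect_cover_tube (z1 : stone_space A) :
  (forall z2, exists a b, P a b /\ rect a b (z1, z2)) ->
  exists2 a, stone_hat a z1 & exists2 cov : seq (A * B), (forall q, q \in cov -> P q.1 q.2) &
    forall p : Z, stone_hat a p.1 -> exists2 q, q \in cov & rect q.1 q.2 p.
Proof.
move=> cover_z1.
have [sb sbP sb_cover] : exists2 sb : seq B,
    (forall b, b \in sb -> exists a, P a b /\ stone_hat a z1) &
    forall z2, exists2 b, b \in sb & stone_hat b z2.
  apply: stone_compact => z2; have [a [b [Pab [z1a z2b]]]] := cover_z1 z2.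
  by exists b => //; exists a.
have [t tb tP] := seq_choice sbP.
have meetE z : stone_hat (\meet_(q <- t) q.2)%O z = all (proj1_sig z) (map snd t).
  by rewrite /stone_hat -(stone_point_meets (proj2_sig z)) big_map.
exists (\meet_(q <- t) q.2)%O.
  by rewrite meetE; apply/allP => a /mapP[q qt ->]; case: (tP q qt).
exists [seq (q.2, q.1) | q <- t] => [_ /mapP[q qt ->]|p]; first by case: (tP q qt).
rewrite meetE => /allP p1t; have [b] := sb_cover p.2; rewrite -tb => /mapP[q qt ->] p2b.
by exists (q.2, q.1); [apply: map_f|split=> //; apply/p1t/map_f].
Qed.

Lemma rect_compact :
  (forall p : Z, exists a b, P a b /\ rect a b p) -> exists cov, rect_cover cov.
Proof.
move=> cover.
have [sa saP sa_cover] : exists2 sa : seq A,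
    (forall a, a \in sa -> exists cov : seq (A * B), (forall q, q \in cov -> P q.1 q.2) /\
       forall p : Z, stone_hat a p.1 -> exists2 q, q \in cov & rect q.1 q.2 p) &
    forall z1, exists2 a, a \in sa & stone_hat a z1.
  apply: stone_compact => z1.
  have [|a z1a [cov covP cov_tube]] := rect_cover_tube (z1 := z1).
    by move=> z2; apply: (cover (z1, z2)).
  by exists a => //; exists cov.
have [t ta tP] := seq_choice saP.
exists (flatten (map snd t)); split=> [q /flattenP[_ /mapP[c ct ->] qc]|p].
  by case: (tP c ct) => covP _; apply: covP.
have [a] := sa_cover p.1; rewrite -ta => /mapP[c ct ->] pc.
have [q qc pq] := (tP c ct).2 p pc.
by exists q => //; apply/flattenP; exists c.2 => //; apply: map_f.
Qed.

End RectangleCovers.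

Section FreeProductSpace.
Variables (R : realType) (dA dB : Order.disp_t).
Variables (A : ctbDistrLatticeType dA) (B : ctbDistrLatticeType dB).
Variables (CAB : RieszSpace R) (eAB : CAB) (chiAB : set (Z12 A B) -> CAB).
Hypothesis hAB : caratheodory_space_free_product eAB chiAB.
Local Open Scope classical_set_scope.
Local Notation clopen := (@prod_clopen _ _ A B).
Implicit Types (U V W : set (Z12 A B)).

Definition chi_rect (ab : A * B) : CAB := chiAB (rect ab.1 ab.2).

Lemma carat_fp_eq0 U : clopen U -> chiAB U = 0 -> U = set0.
Proof.
move=> cU U0; apply: (carat_inj hAB cU (clopen0 A B)).
by rewrite U0; apply/esym/(carat_bot hAB).
Qed.

Lemma chi_rect_meet a a' b b' :
  rmeet (chi_rect (a, b)) (chi_rect (a', b')) = chi_rect ((a `&` a')%O, (b `&` b')%O).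
Proof.
rewrite /chi_rect /= -(carat_meet hAB); try exact: rect_clopen.
by rewrite -rectI.
Qed.

Lemma chi_rect0l b : chi_rect (\bot%O, b) = 0.
Proof. by rewrite /chi_rect rect0l (carat_bot hAB). Qed.

Lemma chi_rect0r a : chi_rect (a, \bot%O) = 0.
Proof. by rewrite /chi_rect rect0r (carat_bot hAB). Qed.

Lemma chi_rect_eq0 a b : chi_rect (a, b) = 0 -> a = \bot%O \/ b = \bot%O.
Proof. by move=> /(carat_fp_eq0 (rect_clopen _ _)); apply: rect_eq0. Qed.

Lemma carat_fp_cutD U V W : clopen U -> clopen V -> clopen W -> V `&` W = set0 ->
  chiAB (U `&` (V `|` W)) = chiAB (U `&` V) + chiAB (U `&` W).
Proof.
move=> cU cV cW VW0; rewrite setIUr; apply: (carat_add hAB); try exact: clopenI.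
by change (U `&` V `&` (U `&` W) = set0); rewrite setIACA setIid VW0 setI0.
Qed.

Lemma carat_fp_cut_addl U b : clopen U -> boolean_additive (fun a => chiAB (U `&` rect a b)).
Proof.
move=> cU a a' aa'; rewrite rectUl carat_fp_cutD //; try exact: rect_clopen.
by rewrite rectI aa' rect0l.
Qed.

Lemma carat_fp_cut_addr U a : clopen U -> boolean_additive (fun b => chiAB (U `&` rect a b)).
Proof.
move=> cU b b' bb'; rewrite rectUr carat_fp_cutD //; try exact: rect_clopen.
by rewrite rectI bb' rect0r.
Qed.

Lemma chi_rect_addl b : boolean_additive (fun a => chi_rect (a, b)).
Proof. by move=> a a' aa'; have := carat_fp_cut_addl b (clopenT A B) aa'; rewrite !setTI. Qed.

Lemma chi_rect_addr a : boolean_additive (fun b => chi_rect (a, b)).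
Proof. by move=> b b' bb'; have := carat_fp_cut_addr a (clopenT A B) bb'; rewrite !setTI. Qed.

Lemma clopen_cover U : clopen U ->
  exists cov, rect_cover (fun a b => rect a b `<=` U \/ rect a b `<=` ~` U) cov.
Proof.
move=> [/prod_openP oU /prod_openP oU']; apply: rect_compact => p.
have [/oU|/oU'] := pselect (U p) => -[a [b [pab ab]]]; exists a, b; split=> //.
  by left.
by right.
Qed.

Lemma clopen_cells U : clopen U -> exists L L',
  forall i j, rect (@atom _ A L i) (@atom _ B L' j) `<=` U \/
              rect (@atom _ A L i) (@atom _ B L' j) `&` U = set0.
Proof.
move=> cU; have [cov [covP cover]] := clopen_cover cU.
exists (map fst cov), (map snd cov) => i j.
have [|/eqP/set0P[z [[z1 z2] zU]]] := pselect (rect (atom i) (atom j) `&` U = set0).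
  by right.
have [q qcov [q1 q2]] := cover z.
have iq := atoms_hat_le (map_f fst qcov) (mem_nth _ (ltn_ord i)) z1 q1.
have jq := atoms_hat_le (map_f snd qcov) (mem_nth _ (ltn_ord j)) z2 q2.
case: (covP q qcov) => [qU|qnU]; first by left=> w /(rect_le iq jq) /qU.
by have := qnU z (conj q1 q2).
Qed.

Lemma carat_fp_lincomb U : clopen U -> exists s, chiAB U = lincomb chi_rect s.
Proof.
move=> cU; have [L [L' cells]] := clopen_cells cU.
pose cell (p : 'I_(size (atoms L)) * 'I_(size (atoms L'))) := (atom p.1, atom p.2).
exists [seq (`[< rect (cell p).1 (cell p).2 `<=` U >]%:R, cell p) | p <- index_enum _].
have -> : chiAB U = chiAB (U `&` rect \top%O \top%O) by rewrite rect11 setIT.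
rewrite /lincomb big_map (boolean_additive_top (carat_fp_cut_addl _ cU) L) /=.
under eq_bigr do rewrite (boolean_additive_top (carat_fp_cut_addr _ cU) L').
rewrite pair_bigA; apply: eq_bigr => p _ /=.
have [cellU|ncellU] := pselect (rect (cell p).1 (cell p).2 `<=` U).
  by rewrite asboolT // scale1r /chi_rect setIidr.
rewrite asboolF // scale0r setIC; case: (cells p.1 p.2) => // ->.
exact: (carat_bot hAB).
Qed.

Lemma carat_fp_span w : exists s, w = lincomb chi_rect s.
Proof.
elim/(carat_span_ind hAB): w => [|c U x cU [s ->]].
  by exists [::]; rewrite /lincomb big_nil.
have [sU ->] := carat_fp_lincomb cU.
by exists ([seq (c * p.1, p.2) | p <- sU] ++ s); rewrite lincomb_cat lincomb_scale.
Qed.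

End FreeProductSpace.

(** * The tensor product *)

Section AtomGrid.
Variables (R : realType) (dA dB : Order.disp_t).
Variables (A : ctbDistrLatticeType dA) (B : ctbDistrLatticeType dB).
Variables (CA : RieszSpace R) (eA : CA) (chiA : A -> CA).
Variables (CB : RieszSpace R) (eB : CB) (chiB : B -> CB).
Hypotheses (hA : caratheodory_space eA chiA) (hB : caratheodory_space eB chiB).
Variables (L : seq A) (L' : seq B).
Local Notation cell p := (@atom _ A L p.1, @atom _ B L' p.2).

Definition grid_coef (s : seq (R * (A * B))) (p : 'I_(size (atoms L)) * 'I_(size (atoms L'))) :=
  \sum_(q <- s) q.1 * ((cell p).1 <= q.2.1)%O%:R * ((cell p).2 <= q.2.2)%O%:R.

Lemma lincomb_grid (V : lmodType R) (phi : CA -> CB -> V) (s : seq (R * (A * B))) :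
  (forall y, linear (phi^~ y)) -> (forall x, linear (phi x)) ->
  (forall q, q \in s -> q.2.1 \in L /\ q.2.2 \in L') ->
  lincomb (fun ab => phi (chiA ab.1) (chiB ab.2)) s =
  \sum_p grid_coef s p *: phi (chiA (cell p).1) (chiB (cell p).2).
Proof.
move=> linl linr sL; rewrite /lincomb big_seq.
under eq_bigr => q qs.
  have [q1 q2] := sL q qs.
  rewrite (boolean_additive_expand (carat_additive hA) q1).
  rewrite (boolean_additive_expand (carat_additive hB) q2).
  rewrite bilinear_sum // pair_bigA scaler_sumr.
over.
rewrite -big_seq exchange_big /=; apply: eq_bigr => p _.
by rewrite /grid_coef scaler_suml; apply: eq_bigr => q _; rewrite scalerA mulrA.
Qed.

End AtomGrid.

Section TensorProduct.
Variables (R : realType) (dA dB : Order.disp_t).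
Variables (A : ctbDistrLatticeType dA) (B : ctbDistrLatticeType dB).
Variables (CA : RieszSpace R) (eA : CA) (chiA : A -> CA).
Variables (CB : RieszSpace R) (eB : CB) (chiB : B -> CB).
Variables (CAB : RieszSpace R) (eAB : CAB) (chiAB : set (Z12 A B) -> CAB).
Hypotheses (hA : caratheodory_space eA chiA) (hB : caratheodory_space eB chiB).
Hypothesis hAB : caratheodory_space_free_product eAB chiAB.
Local Notation chi_rect := (chi_rect chiAB).
Local Notation cell L L' p := (@atom _ A L p.1, @atom _ B L' p.2).

Definition rect_bilinear : CA -> CB -> CAB := carat_biext hA hB (fun a b => chi_rect (a, b)).
Local Notation psi := rect_bilinear.

Lemma rect_bilinear_chi a b : psi (chiA a) (chiB b) = chi_rect (a, b).
Proof. exact: (carat_biext_chi hA hB (chi_rect_addl hAB) (chi_rect_addr hAB)). Qed.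

Lemma rect_bilinear_linl y : linear (psi^~ y).
Proof. exact: (carat_biext_linl hA hB (chi_rect_addl hAB) (chi_rect_addr hAB)). Qed.

Lemma rect_bilinear_linr x : linear (psi x).
Proof. exact: (carat_biext_linr hA hB (chi_rect_addl hAB) (chi_rect_addr hAB)). Qed.

Lemma chi_rect_grid_disjoint L L' :
  disjoint_family (fun p : 'I_(size (atoms L)) * 'I_(size (atoms L')) => chi_rect (cell L L' p)).
Proof.
split=> [p|[i j] [i' j']]; first exact/(carat_rge0 hAB)/rect_clopen.
rewrite (chi_rect_meet hAB) xpair_eqE negb_and => /orP[] /atom_disjoint ->.
  exact: (chi_rect0l hAB).
exact: (chi_rect0r hAB).
Qed.

Lemma rect_bilinear_bimorphism : riesz_bimorphism psi.
Proof.
apply: riesz_bimorphism_of_grids rect_bilinear_linl rect_bilinear_linr _ => x x' y y'.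
have [L [sx sx']] := carat_atoms_span2 hA x x'.
have [L' [sy sy']] := carat_atoms_span2 hB y y'.
exists _, _, (fun i => chiA (@atom _ A L i)), (fun j => chiB (@atom _ B L' j)).
split=> //; [exact: (carat_atoms_disjoint hA)|exact: (carat_atoms_disjoint hB)|].
have -> : (fun p => psi (chiA (atom p.1)) (chiB (atom p.2))) =
    (fun p : 'I_(size (atoms L)) * 'I_(size (atoms L')) => chi_rect (cell L L' p)).
  by apply: funext => p; rewrite rect_bilinear_chi.
exact: chi_rect_grid_disjoint.
Qed.

Lemma lincomb_chi_rect_grid (L : seq A) (L' : seq B) (s : seq (R * (A * B))) :
  (forall q, q \in s -> q.2.1 \in L /\ q.2.2 \in L') ->
  lincomb chi_rect s = \sum_(p : _ * _) grid_coef s p *: chi_rect (cell L L' p).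
Proof.
move=> sL; have -> : lincomb chi_rect s = lincomb (fun ab => psi (chiA ab.1) (chiB ab.2)) s.
  by apply: eq_bigr => -[c [a b]] _; rewrite rect_bilinear_chi.
rewrite (lincomb_grid hA hB rect_bilinear_linl rect_bilinear_linr sL).
by apply: eq_bigr => p _; rewrite rect_bilinear_chi.
Qed.

Variables (G : RieszSpace R) (tp : CA -> CB -> G).
Hypothesis tp_bim : riesz_bimorphism tp.

Let tp_linl y : linear (tp^~ y). Proof. by case: tp_bim => _ linl _ _; apply: linl. Qed.
Let tp_linr x : linear (tp x). Proof. by case: tp_bim => linr _ _ _; apply: linr. Qed.

Definition tp_rect (ab : A * B) : G := tp (chiA ab.1) (chiB ab.2).

Lemma lincomb_tp_rect_grid (L : seq A) (L' : seq B) (s : seq (R * (A * B))) :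
  (forall q, q \in s -> q.2.1 \in L /\ q.2.2 \in L') ->
  lincomb tp_rect s = \sum_(p : _ * _) grid_coef s p *: tp_rect (cell L L' p).
Proof. by move=> sL; rewrite (lincomb_grid hA hB tp_linl tp_linr sL). Qed.

(* On a common grid of atoms, a vanishing cell is an empty rectangle, so one of its sides
   is [\bot]. *)
Lemma tp_rect_compat s : lincomb chi_rect s = 0 -> lincomb tp_rect s = 0.
Proof.
pose L := [seq q.2.1 | q <- s]; pose L' := [seq q.2.2 | q <- s].
have sL q : q \in s -> q.2.1 \in L /\ q.2.2 \in L' by move=> qs; split; apply: map_f.
rewrite (lincomb_chi_rect_grid sL) (lincomb_tp_rect_grid sL).
apply: (comb_eq0_transfer (chi_rect_grid_disjoint L L')) => p /(chi_rect_eq0 hAB) [] ->.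
  by rewrite /tp_rect /= (carat_bot hA) (linear_map0 (tp_linl _)).
by rewrite /tp_rect /= (carat_bot hB) (linear_map0 (tp_linr _)).
Qed.

Definition rect_tp_ext : CAB -> G := span_ext tp_rect (carat_fp_span hAB).
Local Notation M := rect_tp_ext.

Lemma rect_tp_ext_lincomb s : M (lincomb chi_rect s) = lincomb tp_rect s.
Proof. exact: (span_ext_lincomb (carat_fp_span hAB) tp_rect_compat). Qed.

Lemma rect_tp_ext_chi ab : M (chi_rect ab) = tp_rect ab.
Proof. exact: (span_ext_gen (carat_fp_span hAB) tp_rect_compat). Qed.

Lemma rect_tp_ext_linear : linear M.
Proof. exact: (span_ext_linear (carat_fp_span hAB) tp_rect_compat). Qed.

Lemma rect_tp_ext_join w w' : M (rjoin w w') = rjoin (M w) (M w').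
Proof.
have [s ->] := carat_fp_span hAB w; have [s' ->] := carat_fp_span hAB w'.
pose L := [seq q.2.1 | q <- s ++ s']; pose L' := [seq q.2.2 | q <- s ++ s'].
have sL (t : seq (R * (A * B))) : {subset t <= s ++ s'} ->
    forall q, q \in t -> q.2.1 \in L /\ q.2.2 \in L'.
  by move=> ts q /ts qss'; split; apply: map_f.
have sL1 := sL _ (mem_subseq (prefix_subseq s s')).
have sL2 := sL _ (mem_subseq (suffix_subseq s s')).
have grid_lincomb (V : lmodType R) (g : A * B -> V) (c : _ -> R) :
    \sum_p c p *: g (cell L L' p) = lincomb g [seq (c p, cell L L' p) | p <- index_enum _].
  by rewrite /lincomb big_map.
rewrite !rect_tp_ext_lincomb (lincomb_chi_rect_grid sL1) (lincomb_chi_rect_grid sL2).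
rewrite (lincomb_tp_rect_grid sL1) (lincomb_tp_rect_grid sL2).
rewrite (comb_join (chi_rect_grid_disjoint L L')).
rewrite (comb_join (bimorphism_disjoint_family tp_bim (carat_atoms_disjoint hA L)
  (carat_atoms_disjoint hB L'))).
by rewrite grid_lincomb rect_tp_ext_lincomb /lincomb big_map.
Qed.

Lemma rect_tp_ext_riesz_hom : riesz_hom M.
Proof. by split; [exact: rect_tp_ext_linear|exact: rect_tp_ext_join]. Qed.

Lemma rect_tp_ext_bilinear x y : M (psi x y) = tp x y.
Proof.
have lin_y a : linear (fun y => M (psi (chiA a) y)).
  by move=> k u v; rewrite rect_bilinear_linr rect_tp_ext_linear.
have lin_x y' : linear (fun x => M (psi x y')).
  by move=> k u v; rewrite rect_bilinear_linl rect_tp_ext_linear.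
apply: (carat_linear_eq hA (lin_x y) (tp_linl y)) => a {x}.
apply: (carat_linear_eq hB (lin_y a) (tp_linr _)) => b {y}.
by rewrite rect_bilinear_chi rect_tp_ext_chi.
Qed.

End TensorProduct.

Theorem theorem2p1 (R : realType)
    (dA dB : Order.disp_t) (A : ctbDistrLatticeType dA) (B : ctbDistrLatticeType dB)
    (CA : RieszSpace R) (eA : CA) (chiA : A -> CA)
    (hA : caratheodory_space eA chiA)
    (CB : RieszSpace R) (eB : CB) (chiB : B -> CB)
    (hB : caratheodory_space eB chiB)
    (CAB : RieszSpace R) (eAB : CAB) (chiAB : (Z12 A B -> Prop) -> CAB)
    (hAB : caratheodory_space_free_product eAB chiAB)
    (G : RieszSpace R) (tp : CA -> CB -> G)
    (hG : fremlin_tensor_product tp) :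
  exists T : G -> CAB, riesz_iso T.
Proof.
have [archG tp_bim univ] := hG.
have archAB : archimedean CAB by case: hAB.
have [T [[T_hom T_psi] _]] := univ _ _ archAB (rect_bilinear_bimorphism hA hB hAB).
pose M := rect_tp_ext chiA chiB hAB tp.
have M_hom : riesz_hom M := rect_tp_ext_riesz_hom hA hB hAB tp_bim.
exists T; split=> //; exists M => [g|w].
  have MT : M \o T = id.
    apply: (fremlin_hom_id hG (riesz_hom_comp T_hom M_hom)) => x y /=.
    by rewrite T_psi /M rect_tp_ext_bilinear.
  by rewrite -[RHS]/(id g) -MT.
apply: (linear_eq_on_span (carat_fp_span hAB) (T1 := T \o M) (T2 := id)) => // [|[a b]].
- exact: (riesz_hom_comp M_hom T_hom).1.
- rewrite /= /M (rect_tp_ext_chi hA hB hAB tp_bim) /tp_rect T_psi.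
  exact: (rect_bilinear_chi hA hB hAB).
Qed.
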